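(* Let $(X,d)$ be a perfect computable metric space with special points $\{q_i\}_{i\in\omega}$, and let $\mathcal{C}\subseteq X$ be $\Pi^0_1(\emptyset')$ with respect to $(X,d)$. Then there is a c.e. set $D\subseteq\{q_i\}_{i\in\omega}$ of special points such that $\mathcal{C}$ is exactly the set of limit points of $D$ in $(X,d)$.
   Context: A computable metric space is a metric space $(X,d)$ with a dense sequence $\{q_i\}$ of special points such that $d(q_i,q_j)$ is a computable real uniformly in $i,j$. It is perfect if it has no isolated points. Basic open balls are $B(q_i,2^{-j})$, enumerated computably. $\mathcal{C}\subseteq X$ is $\Pi^0_1(\emptyset')$ if there is a $\Sigma^0_2$ set $I\subseteq\omega$ of indices of basic open balls with $X\setminus\mathcal{C}=\bigcup_{k\in I}B_k$. A set $D$ of special points is c.e. if the set of their indices is c.e. A point $x$ is a limit point of $D$ if every open ball around $x$ contains a point of $D$ different from $x$. *)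

From Stdlib Require Import Reals List Arith Cantor.
Import ListNotations.
Open Scope R_scope.

Inductive code : Type :=
  | CZero : code
  | CSucc : code
  | CProj : nat -> code
  | CComp : code -> list code -> code
  | CPRec : code -> code -> code
  | CMu   : code -> code.

Inductive eval : code -> list nat -> nat -> Prop :=
  | ev_zero v : eval CZero v 0
  | ev_succ v : eval CSucc v (S (nth 0 v 0%nat))
  | ev_proj i v : eval (CProj i) v (nth i v 0%nat)
  | ev_comp f gs v ws y :
      evals gs v ws -> eval f ws y -> eval (CComp f gs) v y
  | ev_prec0 b s v y : eval b v y -> eval (CPRec b s) (0%nat :: v) y
  | ev_precS b s n v y z :
      eval (CPRec b s) (n :: v) y -> eval s (n :: y :: v) z ->
      eval (CPRec b s) (S n :: v) z
  | ev_mu f v n :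
      eval f (n :: v) 0%nat ->
      (forall m, (m < n)%nat -> exists k, eval f (m :: v) (S k)) ->
      eval (CMu f) v n
with evals : list code -> list nat -> list nat -> Prop :=
  | evs_nil v : evals [] v []
  | evs_cons g gs v w ws : eval g v w -> evals gs v ws -> evals (g :: gs) v (w :: ws).

Definition ce (A : nat -> Prop) : Prop :=
  exists e : code, forall n, A n <-> exists y, eval e [n] y.

(** Sigma^0_2 subsets of nat: n in A iff exists m forall k R(n,m,k), R computable
    (given by a total recursive function, output 0 meaning "true"). *)
Definition sigma02 (A : nat -> Prop) : Prop :=
  exists e : code,
    (forall n m k, exists y, eval e [n; m; k] y) /\
    (forall n, A n <-> exists m, forall k, eval e [n; m; k] 0%nat).

Definition zigzag (a : nat) : Z :=
  if Nat.even a then Z.of_nat (Nat.div2 a) else (- Z.of_nat (S (Nat.div2 a)))%Z.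

Definition decodeQ (n : nat) : R :=
  let '(a, b) := Cantor.of_nat n in IZR (zigzag a) / INR (S b).

Definition dense_seq (X : Metric_Space) (q : nat -> Base X) : Prop :=
  forall (x : Base X) (eps : R), eps > 0 -> exists i, dist X x (q i) < eps.

Definition computable_metric_space (X : Metric_Space) (q : nat -> Base X) : Prop :=
  dense_seq X q /\
  exists e : code, forall i j n : nat, exists r : nat,
    eval e [i; j; n] r /\
    Rabs (decodeQ r - dist X (q i) (q j)) <= / 2 ^ n.

Definition perfect (X : Metric_Space) : Prop :=
  forall (x : Base X) (eps : R), eps > 0 ->
    exists y : Base X, y <> x /\ dist X x y < eps.

Definition basic_ball (X : Metric_Space) (q : nat -> Base X) (k : nat) (x : Base X) : Prop :=
  let '(i, j) := Cantor.of_nat k in dist X x (q i) < / 2 ^ j.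

(** C is Pi^0_1(emptyset'): X \ C is the union of a Sigma^0_2 set of basic balls. *)
Definition pi01_jump (X : Metric_Space) (q : nat -> Base X) (C : Base X -> Prop) : Prop :=
  exists I : nat -> Prop, sigma02 I /\
    forall x : Base X, ~ C x <-> exists k, I k /\ basic_ball X q k x.

Definition limit_point (X : Metric_Space) (q : nat -> Base X) (W : nat -> Prop) (x : Base X) : Prop :=
  forall eps : R, eps > 0 -> exists i, W i /\ q i <> x /\ dist X x (q i) < eps.

(* A special point q_n is enumerated at level b if it lies in a greedy 2^-(b+4)-net
   of the special points and, for every k < b, at some stage s either every
   candidate witness m <= b for "k is in the Sigma^0_2 index set I" has been refuted,
   or q_n lies outside the basic ball B_k up to 2^-b.  Near a point x of C some net
   point at the scale of any y close to x is enumerated, since both alternatives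
   eventually hold for every k < b and x avoids the balls indexed by I; as X is
   perfect, x is a limit point.  If x is outside C it lies in some B_k with k in I,
   whose unrefuted witness keeps all points enumerated at high levels away from x,
   while each of the finitely many low levels contributes a separated net, which is
   discrete around x.  All conditions are decidable from the computable distances,
   so the enumeration is c.e. *)

From Stdlib Require Import Reals Lra List Arith Lia Cantor Classical IndefiniteDescription Wf_nat.
Import ListNotations.
Open Scope nat_scope.

Section CodeInduction.
Variable P : code -> Prop.
Hypothesis HZero : P CZero.
Hypothesis HSucc : P CSucc.
Hypothesis HProj : forall i, P (CProj i).
Hypothesis HComp : forall f gs, P f -> Forall P gs -> P (CComp f gs).
Hypothesis HPRec : forall b s, P b -> P s -> P (CPRec b s).
Hypothesis HMu : forall f, P f -> P (CMu f).

Fixpoint code_ind' (c : code) : P c :=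
  match c with
  | CZero => HZero
  | CSucc => HSucc
  | CProj i => HProj i
  | CComp f gs => HComp f gs (code_ind' f)
      ((fix all (l : list code) : Forall P l :=
          match l with [] => Forall_nil _ | g :: l => Forall_cons _ (code_ind' g) (all l) end) gs)
  | CPRec b s => HPRec b s (code_ind' b) (code_ind' s)
  | CMu f => HMu f (code_ind' f)
  end.
End CodeInduction.

Lemma eval_deterministic c v y y' : eval c v y -> eval c v y' -> y = y'.
Proof.
  revert v y y'; induction c as [| |i|f gs IHf IHgs|b s IHb IHs|f IHf] using code_ind';
    intros v y y' E E'.
  - inversion E; inversion E'; congruence.
  - inversion E; inversion E'; congruence.
  - inversion E; inversion E'; congruence.
  - inversion E as [| | |? ? ? ws ? Ews Ef| | |]; subst.
    inversion E' as [| | |? ? ? ws' ? Ews' Ef'| | |]; subst.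
    enough (ws = ws') by (subst; eauto).
    clear E E' Ef Ef'; revert ws ws' Ews Ews'.
    induction IHgs as [|g gs IHg _ IH]; intros ws ws' Ews Ews'.
    + inversion Ews; inversion Ews'; congruence.
    + inversion Ews; inversion Ews'; subst; f_equal; eauto.
  - destruct v as [|n w]; [inversion E|].
    revert y y' E E'; induction n; intros y y' E E'.
    + inversion E; inversion E'; subst; eauto.
    + inversion E; inversion E'; subst.
      match goal with
      | H : eval (CPRec b s) (n :: w) ?z, H' : eval (CPRec b s) (n :: w) ?z' |- _ =>
          assert (z = z') as <- by eauto
      end; eauto.
  - inversion E as [| | | | | |? ? ? Ey Hbelow]; inversion E' as [| | | | | |? ? ? Ey' Hbelow']; subst.
    destruct (Nat.lt_trichotomy y y') as [Hlt|[Heq|Hlt]]; auto.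
    + destruct (Hbelow' y Hlt) as [k Hk]; discriminate (IHf _ _ _ Ey Hk).
    + destruct (Hbelow y' Hlt) as [k Hk]; discriminate (IHf _ _ _ Ey' Hk).
Qed.

Definition computes (c : code) (F : list nat -> nat) : Prop := forall v, eval c v (F v).

Lemma least_witness (P : nat -> Prop) :
  (forall n, P n \/ ~ P n) -> (exists n, P n) -> exists n, P n /\ forall m, m < n -> ~ P m.
Proof.
  intros Hdec Hex.
  destruct (dec_inh_nat_subset_has_unique_least_element P Hdec Hex) as [n [[Hn Hleast] _]].
  exists n; split; [exact Hn|]; intros m Hm Pm; specialize (Hleast m Pm); lia.
Qed.

Lemma mu_domain f F v :
  computes f F -> (exists y, eval (CMu f) v y) <-> exists y, F (y :: v) = 0.
Proof.
  intros Hf; split.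
  - intros [y Ey]; inversion Ey as [| | | | | |? ? ? E0 _]; subst.
    exists y; exact (eval_deterministic _ _ _ _ (Hf _) E0).
  - intros Hex.
    destruct (least_witness (fun y => F (y :: v) = 0)) as [y [Hy Hleast]];
      [intros n; destruct (Nat.eq_dec (F (n :: v)) 0); auto | exact Hex |].
    exists y; constructor.
    + rewrite <- Hy; apply Hf.
    + intros m Hm; destruct (F (m :: v)) as [|k] eqn:Fm.
      * exfalso; exact (Hleast m Hm Fm).
      * exists k; rewrite <- Fm; apply Hf.
Qed.

Lemma computes_ternary e (F : nat -> nat -> nat -> nat) :
  (forall i j p, eval e [i; j; p] (F i j p)) ->
  computes (CComp e [CProj 0; CProj 1; CProj 2]) (fun v => F (nth 0 v 0) (nth 1 v 0) (nth 2 v 0)).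
Proof. intros HF v; econstructor; [repeat constructor | apply HF]. Qed.

(** * Expressions denoting total recursive functions *)

(* [ECode] carries its totality proof, so every expression compiles to a total code. *)
Inductive expr : Type :=
  | EZero
  | ESucc
  | EProj (i : nat)
  | EComp (f : expr) (gs : list expr)
  | ERec (base step count : expr) (params : list expr)
  | ECode (c : code) (F : list nat -> nat) (HF : computes c F).

Fixpoint prim_rec (B S : list nat -> nat) (n : nat) (w : list nat) : nat :=
  match n with 0 => B w | S n' => S (n' :: prim_rec B S n' w :: w) end.

Fixpoint denote (e : expr) (v : list nat) : nat :=
  match e with
  | EZero => 0
  | ESucc => S (nth 0 v 0)
  | EProj i => nth i v 0
  | EComp f gs => denote f (map (fun g => denote g v) gs)
  | ERec b s n gs => prim_rec (denote b) (denote s) (denote n v) (map (fun g => denote g v) gs)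
  | ECode _ F _ => F v
  end.

Fixpoint compile (e : expr) : code :=
  match e with
  | EZero => CZero
  | ESucc => CSucc
  | EProj i => CProj i
  | EComp f gs => CComp (compile f) (map compile gs)
  | ERec b s n gs => CComp (CPRec (compile b) (compile s)) (compile n :: map compile gs)
  | ECode c _ _ => c
  end.

Section ExprInduction.
Variable P : expr -> Prop.
Hypothesis HZero : P EZero.
Hypothesis HSucc : P ESucc.
Hypothesis HProj : forall i, P (EProj i).
Hypothesis HComp : forall f gs, P f -> Forall P gs -> P (EComp f gs).
Hypothesis HRec : forall b s n gs, P b -> P s -> P n -> Forall P gs -> P (ERec b s n gs).
Hypothesis HCode : forall c F HF, P (ECode c F HF).

Fixpoint expr_ind' (e : expr) : P e :=
  let all := fix all (l : list expr) : Forall P l :=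
    match l with [] => Forall_nil _ | g :: l => Forall_cons _ (expr_ind' g) (all l) end in
  match e with
  | EZero => HZero
  | ESucc => HSucc
  | EProj i => HProj i
  | EComp f gs => HComp f gs (expr_ind' f) (all gs)
  | ERec b s n gs => HRec b s n gs (expr_ind' b) (expr_ind' s) (expr_ind' n) (all gs)
  | ECode c F HF => HCode c F HF
  end.
End ExprInduction.

Lemma evals_compile gs v :
  Forall (fun g => computes (compile g) (denote g)) gs ->
  evals (map compile gs) v (map (fun g => denote g v) gs).
Proof. induction 1; constructor; auto. Qed.

Lemma eval_prim_rec b s B S n w :
  computes b B -> computes s S -> eval (CPRec b s) (n :: w) (prim_rec B S n w).
Proof. intros Hb Hs; induction n; econstructor; eauto. Qed.

Lemma compile_correct e : computes (compile e) (denote e).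
Proof.
  induction e using expr_ind'; intros v; cbn.
  - constructor.
  - constructor.
  - constructor.
  - econstructor; [apply evals_compile|]; auto.
  - econstructor; [constructor; [auto | apply evals_compile; auto]|].
    apply eval_prim_rec; auto.
  - auto.
Qed.

Definition holds (e : expr) (v : list nat) : Prop := denote e v <> 0.

Fixpoint e_const (n : nat) : expr :=
  match n with 0 => EZero | S n => EComp ESucc [e_const n] end.

Definition e_succ (a : expr) : expr := EComp ESucc [a].
Definition e_add (a b : expr) : expr := ERec (EProj 0) (e_succ (EProj 1)) a [b].
Definition e_mul (a b : expr) : expr := ERec EZero (e_add (EProj 1) (EProj 2)) a [b].
Definition e_pred (a : expr) : expr := ERec EZero (EProj 0) a [].
Definition e_sub (a b : expr) : expr := ERec (EProj 0) (e_pred (EProj 1)) b [a].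
Definition e_not (a : expr) : expr := e_sub (e_const 1) a.
Definition e_lt (a b : expr) : expr := e_not (e_not (e_sub b a)).
Definition e_pow2 (a : expr) : expr := ERec (e_const 1) (e_add (EProj 1) (EProj 1)) a [].
Definition e_odd (a : expr) : expr := ERec EZero (e_not (EProj 1)) a [].
Definition e_div2 (a : expr) : expr := ERec EZero (e_add (EProj 1) (e_odd (EProj 0))) a [].
Definition e_testbit (a i : expr) : expr := e_odd (ERec (EProj 0) (e_div2 (EProj 1)) i [a]).

Definition env (A : nat) (v : list nat) : list nat := map (fun i => nth i v 0) (seq 0 A).

Definition e_sum (A : nat) (bound body : expr) : expr :=
  ERec EZero (e_add (EProj 1) (EComp body (EProj 0 :: map (fun i => EProj (S (S i))) (seq 0 A))))
    bound (map EProj (seq 0 A)).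
Definition e_forall (A : nat) (bound body : expr) : expr := e_not (e_sum A bound (e_not body)).

Fixpoint sum_below (n : nat) (f : nat -> nat) : nat :=
  match n with 0 => 0 | S n => sum_below n f + f n end.

Lemma denote_const n v : denote (e_const n) v = n.
Proof. induction n; cbn; auto. Qed.

Lemma denote_succ a v : denote (e_succ a) v = S (denote a v).
Proof. reflexivity. Qed.

Lemma denote_add a b v : denote (e_add a b) v = denote a v + denote b v.
Proof. cbn [denote e_add map]. induction (denote a v); cbn; auto. Qed.

Lemma denote_mul a b v : denote (e_mul a b) v = denote a v * denote b v.
Proof.
  cbn [denote e_mul map]. induction (denote a v) as [|n IH]; [reflexivity|].
  cbn [prim_rec]; rewrite denote_add; cbn [denote nth]; rewrite IH; lia.
Qed.

Lemma denote_pred a v : denote (e_pred a) v = pred (denote a v).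
Proof. cbn [denote e_pred map]. destruct (denote a v); reflexivity. Qed.

Lemma denote_sub a b v : denote (e_sub a b) v = denote a v - denote b v.
Proof.
  cbn [denote e_sub map]. induction (denote b v) as [|n IH]; [cbn; lia|].
  cbn [prim_rec]; rewrite denote_pred; cbn [denote nth]; rewrite IH; lia.
Qed.

Lemma denote_not a v : denote (e_not a) v = 1 - denote a v.
Proof. unfold e_not; rewrite denote_sub, denote_const; reflexivity. Qed.

Lemma denote_lt a b v : denote (e_lt a b) v = Nat.b2n (denote a v <? denote b v).
Proof.
  unfold e_lt; rewrite !denote_not, denote_sub.
  destruct (Nat.ltb_spec (denote a v) (denote b v)); cbn [Nat.b2n]; lia.
Qed.

Lemma denote_pow2 a v : denote (e_pow2 a) v = 2 ^ denote a v.
Proof.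
  cbn [denote e_pow2 map]. induction (denote a v) as [|n IH]; [apply denote_const|].
  cbn [prim_rec]; rewrite denote_add; cbn [denote nth]; rewrite IH; cbn; lia.
Qed.

Lemma denote_odd a v : denote (e_odd a) v = Nat.b2n (Nat.odd (denote a v)).
Proof.
  cbn [denote e_odd map]. induction (denote a v) as [|n IH]; [reflexivity|].
  cbn [prim_rec]; rewrite denote_not; cbn [nth]; rewrite IH, Nat.odd_succ, <- Nat.negb_odd.
  destruct (Nat.odd n); reflexivity.
Qed.

Lemma div2_succ n : Nat.div2 (S n) = Nat.div2 n + Nat.b2n (Nat.odd n).
Proof.
  rewrite (Nat.div2_odd n) at 1.
  destruct (Nat.odd n); cbn [Nat.b2n];
    [replace (S (2 * Nat.div2 n + 1)) with (2 * S (Nat.div2 n)) by lia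
    |replace (S (2 * Nat.div2 n + 0)) with (1 + 2 * Nat.div2 n) by lia];
    rewrite ?Nat.div2_double, ?Nat.div2_succ_double; lia.
Qed.

Lemma denote_div2 a v : denote (e_div2 a) v = Nat.div2 (denote a v).
Proof.
  cbn [denote e_div2 map]. induction (denote a v) as [|n IH]; [reflexivity|].
  cbn [prim_rec]; rewrite denote_add, denote_odd; cbn [nth]; rewrite IH, div2_succ; reflexivity.
Qed.

Lemma testbit_iter_div2 a i : Nat.testbit a i = Nat.odd (Nat.iter i Nat.div2 a).
Proof.
  revert a; induction i; intros a; [reflexivity|].
  rewrite Nat.iter_succ_r; apply IHi.
Qed.

Lemma denote_testbit a i v : denote (e_testbit a i) v = Nat.b2n (Nat.testbit (denote a v) (denote i v)).
Proof.
  unfold e_testbit; rewrite denote_odd, testbit_iter_div2; do 2 f_equal.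
  cbn [denote map]. induction (denote i v) as [|n IH]; [reflexivity|].
  cbn [prim_rec]; rewrite denote_div2; cbn [nth]; rewrite IH; reflexivity.
Qed.

Lemma env_idem A v : env A (env A v) = env A v.
Proof.
  unfold env at 1 2; apply map_ext_in; intros i Hi; apply in_seq in Hi.
  rewrite (nth_indep _ _ ((fun j => nth j v 0) 0)) by (rewrite length_map, length_seq; lia).
  rewrite (map_nth (fun j => nth j v 0) (seq 0 A) 0 i), seq_nth by lia; reflexivity.
Qed.

Lemma denote_sum A bound body v :
  denote (e_sum A bound body) v = sum_below (denote bound v) (fun k => denote body (k :: env A v)).
Proof.
  cbn [denote e_sum]. rewrite map_map; cbn [denote]; fold (env A v).
  induction (denote bound v) as [|n IH]; [reflexivity|].
  cbn [prim_rec sum_below]; rewrite denote_add; cbn [denote nth map]; rewrite IH, map_map.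
  cbn [denote nth]; fold (env A (env A v)); rewrite env_idem; reflexivity.
Qed.

Lemma holds_not a v : holds (e_not a) v <-> ~ holds a v.
Proof. unfold holds; rewrite denote_not; lia. Qed.

Lemma denote_not_eq0 a v : denote (e_not a) v = 0 <-> holds a v.
Proof. unfold holds; rewrite denote_not; lia. Qed.

Lemma holds_lt a b v : holds (e_lt a b) v <-> denote a v < denote b v.
Proof. unfold holds; rewrite denote_lt; destruct (Nat.ltb_spec (denote a v) (denote b v)); cbn; lia. Qed.

Lemma holds_mul a b v : holds (e_mul a b) v <-> holds a v /\ holds b v.
Proof. unfold holds; rewrite denote_mul; lia. Qed.

Lemma holds_add a b v : holds (e_add a b) v <-> holds a v \/ holds b v.
Proof. unfold holds; rewrite denote_add; lia. Qed.

Lemma holds_testbit a i v : holds (e_testbit a i) v <-> Nat.testbit (denote a v) (denote i v) = true.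
Proof. unfold holds; rewrite denote_testbit; destruct Nat.testbit; cbn; intuition congruence. Qed.

Lemma sum_below_ext n f g : (forall k, k < n -> f k = g k) -> sum_below n f = sum_below n g.
Proof.
  induction n; intros H; cbn; [reflexivity|].
  rewrite IHn by (intros; apply H; lia); rewrite H by lia; reflexivity.
Qed.

Lemma sum_below_neq0 n f : sum_below n f <> 0 <-> exists k, k < n /\ f k <> 0.
Proof.
  induction n as [|n IH]; cbn [sum_below].
  - split; [lia | intros (k & Hk & _); lia].
  - split.
    + intros H; destruct (Nat.eq_dec (f n) 0) as [Hf|Hf].
      * destruct IH as [[k Hk] _]; [lia|]; exists k; split; [lia | apply Hk].
      * exists n; split; [lia | exact Hf].
    + intros (k & Hk & Hfk); destruct (Nat.eq_dec k n) as [->|Hkn]; [lia|].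
      enough (sum_below n f <> 0) by lia.
      apply IH; exists k; split; [lia | exact Hfk].
Qed.

Lemma holds_sum A bound body v :
  holds (e_sum A bound body) v <-> exists k, k < denote bound v /\ holds body (k :: env A v).
Proof. unfold holds; rewrite denote_sum; apply sum_below_neq0. Qed.

Lemma holds_forall A bound body v :
  holds (e_forall A bound body) v <-> forall k, k < denote bound v -> holds body (k :: env A v).
Proof.
  unfold e_forall; rewrite holds_not, holds_sum; split.
  - intros H k Hk; apply NNPP; intros Hnot; apply H; exists k; rewrite holds_not; auto.
  - intros H (k & Hk & Hnot); rewrite holds_not in Hnot; auto.
Qed.

Fixpoint tri (m : nat) : nat := match m with 0 => 0 | S k => tri k + S k end.

Definition e_tri (a : expr) : expr := ERec EZero (e_add (EProj 1) (e_succ (EProj 0))) a [].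

Lemma denote_tri a v : denote (e_tri a) v = tri (denote a v).
Proof.
  cbn [denote e_tri map]. induction (denote a v) as [|n IH]; [reflexivity|].
  cbn [prim_rec tri]; rewrite denote_add; cbn [denote nth map]; rewrite IH; reflexivity.
Qed.

Lemma tri_le_mono m n : m <= n -> tri m <= tri n.
Proof. induction 1; cbn; lia. Qed.

Lemma le_tri n : n <= tri n.
Proof. induction n; cbn; lia. Qed.

Lemma to_nat_tri x y : to_nat (x, y) = y + tri (y + x).
Proof. cbn; f_equal; induction (y + x) as [|n IH]; cbn; [reflexivity | rewrite IH; lia]. Qed.

Definition cantor_diag (n : nat) : nat := fst (of_nat n) + snd (of_nat n).

Lemma cantor_diag_spec n :
  tri (cantor_diag n) <= n < tri (S (cantor_diag n)) /\ n = snd (of_nat n) + tri (cantor_diag n).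
Proof.
  unfold cantor_diag; pose proof (cancel_to_of n) as Hn; destruct (of_nat n) as [x y]; cbn.
  rewrite to_nat_tri, (Nat.add_comm y x) in Hn; lia.
Qed.

Lemma cantor_diag_count n : cantor_diag n = sum_below n (fun m => Nat.b2n (tri (S m) <? S n)).
Proof.
  destruct (cantor_diag_spec n) as [[Hlo Hhi] _]; set (c := cantor_diag n) in *.
  enough (forall N, sum_below N (fun m => Nat.b2n (tri (S m) <? S n)) = Nat.min N c)
    by (rewrite H; pose proof (le_tri c); lia).
  induction N as [|N IH]; [reflexivity|]; cbn [sum_below]; rewrite IH.
  destruct (Nat.ltb_spec (tri (S N)) (S n)) as [Hlt|Hge]; cbn [Nat.b2n].
  - assert (N < c); [|lia].
    destruct (Nat.lt_ge_cases N c) as [|Hle]; [assumption|].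
    pose proof (tri_le_mono _ _ (le_n_S _ _ Hle)); lia.
  - assert (c <= N); [|lia].
    destruct (Nat.le_gt_cases c N) as [|Hlt]; [assumption|].
    pose proof (tri_le_mono _ _ Hlt); lia.
Qed.

Definition e_cantor_diag (a : expr) : expr :=
  EComp (e_sum 1 (EProj 0) (e_lt (e_tri (e_succ (EProj 0))) (e_succ (EProj 1)))) [a].
Definition e_snd (a : expr) : expr := e_sub a (e_tri (e_cantor_diag a)).
Definition e_fst (a : expr) : expr := e_sub (e_cantor_diag a) (e_snd a).

Lemma denote_cantor_diag a v : denote (e_cantor_diag a) v = cantor_diag (denote a v).
Proof.
  unfold e_cantor_diag; cbn [denote map]; rewrite denote_sum, cantor_diag_count.
  apply sum_below_ext; intros m _; cbn [env seq map nth].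
  rewrite denote_lt, denote_tri; reflexivity.
Qed.

Lemma denote_snd a v : denote (e_snd a) v = snd (of_nat (denote a v)).
Proof.
  unfold e_snd; rewrite denote_sub, denote_tri, denote_cantor_diag.
  destruct (cantor_diag_spec (denote a v)); lia.
Qed.

Lemma denote_fst a v : denote (e_fst a) v = fst (of_nat (denote a v)).
Proof. unfold e_fst; rewrite denote_sub, denote_snd, denote_cantor_diag; unfold cantor_diag; lia. Qed.

(** * Greedy nets *)

Section GreedyNet.
Variable far : nat -> nat -> bool.

(* Bit [m] of [greedy_mask n] records whether [m] (for [m < n]) was admitted to
   the net: [n] is admitted iff it is [far] from every earlier admitted point. *)
Fixpoint greedy_mask (n : nat) : nat :=
  match n with
  | 0 => 0
  | S n => greedy_mask n +
      Nat.b2n (forallb (fun m => (negb (Nat.testbit (greedy_mask n) m) || far m n)%bool)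
                       (seq 0 n)) * 2 ^ n
  end.

Definition in_greedy_net (n : nat) : Prop := Nat.testbit (greedy_mask (S n)) n = true.

Lemma greedy_mask_lt n : greedy_mask n < 2 ^ n.
Proof.
  induction n; cbn [greedy_mask]; [cbn; lia|].
  rewrite Nat.pow_succ_r'; destruct forallb; cbn; lia.
Qed.

Lemma testbit_add_high a n m c : a < 2 ^ n -> m < n -> Nat.testbit (a + c * 2 ^ n) m = Nat.testbit a m.
Proof.
  intros Ha Hm; rewrite <- (Nat.mod_pow2_bits_low _ n) by exact Hm.
  rewrite Nat.Div0.mod_add, Nat.mod_small by exact Ha; reflexivity.
Qed.

Lemma testbit_add_top a n (c : bool) : a < 2 ^ n -> Nat.testbit (a + Nat.b2n c * 2 ^ n) n = c.
Proof. intros Ha; apply (Nat.testbit_unique _ _ _ a 0); [exact Ha | lia]. Qed.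

Lemma greedy_mask_stable m n :
  m < n -> Nat.testbit (greedy_mask n) m = Nat.testbit (greedy_mask (S m)) m.
Proof.
  induction n as [|n IH]; intros Hm; [lia|].
  destruct (Nat.eq_dec m n) as [->|Hne]; [reflexivity|].
  cbn [greedy_mask]; rewrite testbit_add_high by (apply greedy_mask_lt || lia).
  apply IH; lia.
Qed.

Lemma in_greedy_net_iff n : in_greedy_net n <-> forall m, m < n -> in_greedy_net m -> far m n = true.
Proof.
  unfold in_greedy_net at 1; cbn [greedy_mask]; rewrite testbit_add_top by apply greedy_mask_lt.
  rewrite forallb_forall; split.
  - intros H m Hm Hin; specialize (H m (proj2 (in_seq _ _ _) (conj (Nat.le_0_l m) Hm))).
    unfold in_greedy_net in Hin; rewrite greedy_mask_stable, Hin in H by exact Hm; exact H.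
  - intros H m Hm; apply in_seq in Hm; rewrite greedy_mask_stable by lia.
    destruct (Nat.testbit (greedy_mask (S m)) m) eqn:Hin; [apply H; auto; lia | reflexivity].
Qed.
End GreedyNet.

(* [rel] is evaluated on [m; n; mask; L]. *)
Definition e_greedy_mask (rel : expr) : expr :=
  ERec EZero
    (e_add (EProj 1)
       (e_mul (e_forall 3 (EProj 0) (e_add (e_not (e_testbit (EProj 2) (EProj 0))) rel))
          (e_pow2 (EProj 0))))
    (EProj 0) [EProj 1].

Lemma b2n_of_iff x b : x <= 1 -> (x <> 0 <-> b = true) -> x = Nat.b2n b.
Proof. destruct b; cbn; intuition lia. Qed.

Lemma denote_greedy_mask rel (far : nat -> nat -> nat -> bool) :
  (forall m n acc L, holds rel [m; n; acc; L] <-> far L m n = true) ->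
  forall n L, denote (e_greedy_mask rel) [n; L] = greedy_mask (far L) n.
Proof.
  intros Hrel n L; cbn [denote e_greedy_mask map nth].
  induction n as [|n IH]; [reflexivity|].
  cbn [prim_rec greedy_mask]; rewrite denote_add, denote_mul, denote_pow2; cbn [denote nth].
  rewrite IH; do 2 f_equal; apply b2n_of_iff; [unfold e_forall; rewrite denote_not; lia|].
  fold (holds (e_forall 3 (EProj 0)
                 (e_add (e_not (e_testbit (EProj 2) (EProj 0))) rel)) [n; greedy_mask (far L) n; L]).
  rewrite holds_forall, forallb_forall; cbn [denote nth env seq map]; split.
  - intros H m Hm; apply in_seq in Hm; specialize (H m (proj2 Hm)).
    rewrite holds_add, holds_not, holds_testbit, Hrel in H; cbn [denote nth] in H.
    destruct (Nat.testbit _ m); cbn; intuition congruence.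
  - intros H m Hm; specialize (H m (proj2 (in_seq _ _ _) (conj (Nat.le_0_l m) Hm))).
    rewrite holds_add, holds_not, holds_testbit, Hrel; cbn [denote nth].
    destruct (Nat.testbit _ m); cbn in H; intuition congruence.
Qed.

(** * The enumeration *)

(* [r] codes the rational [zigzag a / (b + 1)] with [(a, b) = of_nat r]; negative
   values are replaced by [0], which is harmless for approximations of distances. *)
Definition num_part (r : nat) : nat := Nat.b2n (Nat.even (fst (of_nat r))) * Nat.div2 (fst (of_nat r)).
Definition den_part (r : nat) : nat := S (snd (of_nat r)).

Section Construction.
Variables approx refute : nat -> nat -> nat -> nat.

Definition far (L m n : nat) : bool :=
  den_part (approx m n (L + 2)) <=? num_part (approx m n (L + 2)) * 2 ^ L.

Definition in_net (L n : nat) : Prop := in_greedy_net (far L) n.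

Definition refuted (k b s : nat) : Prop :=
  forall m, m <= b -> exists t, t <= s /\ refute k m t <> 0.

(* With [(c, j) = of_nat k] and [r] the stage-[s] approximation of [d(q n, q c)],
   this says [2^-j <= r + 2^-b], with denominators cleared. *)
Definition clear_of_ball (n k b s : nat) : Prop :=
  let r := approx n (fst (of_nat k)) s in
  ~ (num_part r * 2 ^ b * 2 ^ snd (of_nat k) + den_part r * 2 ^ snd (of_nat k) < den_part r * 2 ^ b).

Definition admitted (n b s : nat) : Prop :=
  in_net (b + 4) n /\ forall k, k < b -> refuted k b s \/ clear_of_ball n k b s.

Definition enumerated (n : nat) : Prop := exists s b, b <= s /\ admitted n b s.

Section Enumeration.
Variables e_a e_r : code.
Hypothesis approx_code : forall i j p, eval e_a [i; j; p] (approx i j p).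
Hypothesis refute_code : forall i j p, eval e_r [i; j; p] (refute i j p).

Definition e_approx (x y z : expr) : expr :=
  EComp (ECode _ _ (computes_ternary e_a approx approx_code)) [x; y; z].
Definition e_refute (x y z : expr) : expr :=
  EComp (ECode _ _ (computes_ternary e_r refute refute_code)) [x; y; z].
Definition e_num (r : expr) : expr := e_mul (e_not (e_odd (e_fst r))) (e_div2 (e_fst r)).
Definition e_den (r : expr) : expr := e_succ (e_snd r).

Lemma denote_num r v : denote (e_num r) v = num_part (denote r v).
Proof.
  unfold e_num, num_part; rewrite denote_mul, denote_not, denote_odd, denote_div2, denote_fst.
  rewrite <- Nat.negb_odd; destruct Nat.odd; reflexivity.
Qed.

Lemma denote_den r v : denote (e_den r) v = den_part (denote r v).
Proof. unfold e_den; rewrite denote_succ, denote_snd; reflexivity. Qed.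

(* Evaluated on [m; n; mask; L] *)
Definition e_far : expr :=
  let r := e_approx (EProj 0) (EProj 1) (e_add (EProj 3) (e_const 2)) in
  e_not (e_lt (e_mul (e_num r) (e_pow2 (EProj 3))) (e_den r)).

Definition e_in_net (L n : expr) : expr := e_testbit (EComp (e_greedy_mask e_far) [e_succ n; L]) n.

Lemma holds_in_net L n v : holds (e_in_net L n) v <-> in_net (denote L v) (denote n v).
Proof.
  unfold e_in_net, in_net, in_greedy_net; rewrite holds_testbit; cbn [denote map].
  rewrite (denote_greedy_mask _ far); [reflexivity|].
  intros m n' acc L'; unfold e_far, far.
  rewrite holds_not, holds_lt, denote_mul, denote_pow2, denote_num, denote_den.
  cbn [denote e_approx map nth]; rewrite denote_add, denote_const; cbn [nth].
  rewrite Nat.leb_le; apply Nat.nlt_ge.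
Qed.

(* Both evaluated on [k; b; s; n] *)
Definition e_refuted : expr :=
  e_forall 4 (e_succ (EProj 1)) (e_sum 5 (e_succ (EProj 3)) (e_refute (EProj 2) (EProj 1) (EProj 0))).

Definition e_clear_of_ball : expr :=
  let r := e_approx (EProj 3) (e_fst (EProj 0)) (EProj 2) in
  let j := e_pow2 (e_snd (EProj 0)) in
  e_not (e_lt (e_add (e_mul (e_mul (e_num r) (e_pow2 (EProj 1))) j) (e_mul (e_den r) j))
              (e_mul (e_den r) (e_pow2 (EProj 1)))).

(* Evaluated on [b; s; n] *)
Definition e_admitted : expr :=
  e_mul (e_in_net (e_add (EProj 0) (e_const 4)) (EProj 2))
        (e_forall 3 (EProj 0) (e_add e_refuted e_clear_of_ball)).

Lemma holds_refuted k b s n : holds e_refuted [k; b; s; n] <-> refuted k b s.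
Proof.
  unfold e_refuted, refuted; rewrite holds_forall; cbn [denote e_succ nth env seq map].
  split; intros H m Hm.
  - destruct (proj1 (holds_sum _ _ _ _) (H m ltac:(lia))) as (t & Ht & Hrt).
    exists t; cbn [denote e_succ nth env seq map] in *; split; [lia | exact Hrt].
  - apply holds_sum; destruct (H m ltac:(lia)) as (t & Ht & Hrt).
    exists t; cbn [denote e_succ nth env seq map]; split; [lia | exact Hrt].
Qed.

Lemma holds_clear_of_ball k b s n : holds e_clear_of_ball [k; b; s; n] <-> clear_of_ball n k b s.
Proof.
  unfold e_clear_of_ball, clear_of_ball; rewrite holds_not, holds_lt.
  rewrite !denote_add, !denote_mul, !denote_pow2, denote_num, denote_den, denote_snd.
  cbn [denote e_approx map nth]; rewrite denote_fst; reflexivity.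
Qed.

Lemma holds_admitted b s n : holds e_admitted [b; s; n] <-> admitted n b s.
Proof.
  unfold e_admitted, admitted; rewrite holds_mul, holds_in_net, holds_forall.
  rewrite denote_add, denote_const; cbn [denote e_succ nth env seq map].
  apply and_iff_compat_l; split; intros H k Hk; specialize (H k Hk).
  - rewrite holds_add, holds_refuted, holds_clear_of_ball in H; exact H.
  - rewrite holds_add, holds_refuted, holds_clear_of_ball; exact H.
Qed.

(* Evaluated on [s; n] *)
Definition e_enumerated_by : expr := e_sum 2 (e_succ (EProj 0)) e_admitted.

Lemma holds_enumerated_by s n : holds e_enumerated_by [s; n] <-> exists b, b <= s /\ admitted n b s.
Proof.
  unfold e_enumerated_by; rewrite holds_sum; cbn [denote e_succ nth env seq map].
  split; intros (b & Hb & H); exists b; (split; [lia | apply holds_admitted, H]).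
Qed.

Definition enumeration_code : code := CMu (compile (e_not e_enumerated_by)).

Lemma enumerated_ce : ce enumerated.
Proof.
  exists enumeration_code; intros n; unfold enumeration_code.
  rewrite (mu_domain _ _ _ (compile_correct _)).
  split; intros [s H]; exists s.
  - apply denote_not_eq0, holds_enumerated_by, H.
  - apply holds_enumerated_by, denote_not_eq0, H.
Qed.
End Enumeration.
End Construction.

Open Scope R_scope.

Lemma pow2_pos n : 0 < 2 ^ n.
Proof. apply pow_lt; lra. Qed.

Lemma inv_pow2_pos n : 0 < / 2 ^ n.
Proof. apply Rinv_0_lt_compat, pow2_pos. Qed.

Lemma INR_pow2 n : INR (2 ^ n) = 2 ^ n.
Proof. rewrite pow_INR; reflexivity. Qed.

Lemma inv_pow2_add a c : / 2 ^ (a + c) = / 2 ^ a * / 2 ^ c.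
Proof. rewrite pow_add, Rinv_mult; reflexivity. Qed.

Lemma inv_pow2_le m n : (m <= n)%nat -> / 2 ^ n <= / 2 ^ m.
Proof. intros H; apply Rinv_le_contravar; [apply pow2_pos | apply Rle_pow; [lra | exact H]]. Qed.

Lemma inv_pow2_lt_any e : 0 < e -> exists N, / 2 ^ N < e.
Proof.
  intros He; destruct (pow_lt_1_zero (/ 2)) with (y := e) as [N HN];
    [rewrite Rabs_pos_eq; lra | exact He |].
  exists N; specialize (HN N (le_n _)); rewrite Rabs_pos_eq, pow_inv in HN; [exact HN|].
  apply pow_le; lra.
Qed.

Lemma dyadic_scale d : 0 < d -> d <= / 2 -> exists b, / 2 ^ (b + 2) < d /\ d <= / 2 ^ (b + 1).
Proof.
  intros Hd Hd2; destruct (inv_pow2_lt_any d Hd) as [N HN].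
  induction N as [N IH] using lt_wf_ind.
  destruct N as [|[|N]]; [cbn in HN; lra | cbn in HN; lra|].
  destruct (Rlt_le_dec (/ 2 ^ S N) d) as [H|H]; [apply (IH (S N)); auto|].
  exists N; rewrite Nat.add_comm, (Nat.add_comm N 1); exact (conj HN H).
Qed.

Lemma inv_le_div_iff (a D P : R) : 0 < D -> 0 < P -> (/ P <= a / D <-> D <= a * P).
Proof.
  intros HD HP; split; intros H.
  - apply Rmult_le_compat_r with (r := D * P) in H; [|nra].
    replace (a / D * (D * P)) with (a * P) in H by (field; lra).
    replace (/ P * (D * P)) with D in H by (field; lra); exact H.
  - apply Rmult_le_reg_r with (r := D * P); [nra|].
    replace (a / D * (D * P)) with (a * P) by (field; lra).
    replace (/ P * (D * P)) with D by (field; lra); exact H.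
Qed.

Lemma inv_le_div_add_iff (a D B J : R) : 0 < D -> 0 < B -> 0 < J ->
  (/ J <= a / D + / B <-> D * B <= a * B * J + D * J).
Proof.
  intros HD HB HJ; assert (HDBJ : 0 < D * B * J) by (apply Rmult_lt_0_compat; nra); split; intros H.
  - apply Rmult_le_compat_r with (r := D * B * J) in H; [|lra].
    replace ((a / D + / B) * (D * B * J)) with (a * B * J + D * J) in H by (field; lra).
    replace (/ J * (D * B * J)) with (D * B) in H by (field; lra); exact H.
  - apply Rmult_le_reg_r with (r := D * B * J); [exact HDBJ|].
    replace ((a / D + / B) * (D * B * J)) with (a * B * J + D * J) by (field; lra).
    replace (/ J * (D * B * J)) with (D * B) by (field; lra); exact H.
Qed.

Lemma eventually_below (Q : nat -> nat -> Prop) b :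
  (forall k, (k < b)%nat -> exists S, forall s, (S <= s)%nat -> Q k s) ->
  exists S, forall k, (k < b)%nat -> forall s, (S <= s)%nat -> Q k s.
Proof.
  induction b as [|b IH]; intros H; [exists 0%nat; intros; lia|].
  destruct IH as [S1 H1]; [intros; apply H; lia|].
  destruct (H b (Nat.lt_succ_diag_r b)) as [S2 H2].
  exists (S1 + S2)%nat; intros k Hk s Hs; destruct (Nat.eq_dec k b) as [->|Hkb];
    [apply H2 | apply H1]; lia.
Qed.

(** * Correctness of the enumeration *)

Section Correctness.
Variables (X : Metric_Space) (q : nat -> Base X) (approx refute : nat -> nat -> nat -> nat).
Hypothesis approx_spec : forall i j p, Rabs (decodeQ (approx i j p) - dist X (q i) (q j)) <= / 2 ^ p.

Definition rho (i j p : nat) : R := INR (num_part (approx i j p)) / INR (den_part (approx i j p)).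

Lemma den_part_pos r : 0 < INR (den_part r).
Proof. apply lt_0_INR; unfold den_part; lia. Qed.

Lemma rho_between i j p : dist X (q i) (q j) - / 2 ^ p <= rho i j p <= dist X (q i) (q j) + / 2 ^ p.
Proof.
  pose proof (approx_spec i j p) as H; pose proof (dist_pos X (q i) (q j)) as Hd.
  unfold rho, num_part, den_part, decodeQ, zigzag in *.
  destruct (of_nat (approx i j p)) as [a b]; cbn [fst snd] in *.
  assert (Hb : 0 < INR (S b)) by (apply lt_0_INR; lia).
  destruct (Nat.even a); cbn [Nat.b2n]; rewrite ?Nat.mul_1_l, ?Nat.mul_0_l.
  - rewrite <- INR_IZR_INZ in H; unfold Rabs in H; destruct Rcase_abs in H; lra.
  - rewrite opp_IZR, <- INR_IZR_INZ in H.
    assert (0 <= INR (S (Nat.div2 a)) / INR (S b))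
      by (apply Rmult_le_pos; [apply pos_INR | left; apply Rinv_0_lt_compat, Hb]).
    change (INR 0) with 0; unfold Rdiv at 1; rewrite Rmult_0_l.
    replace (- INR (S (Nat.div2 a)) / INR (S b)) with (- (INR (S (Nat.div2 a)) / INR (S b))) in H
      by (field; lra).
    unfold Rabs in H; destruct Rcase_abs in H; lra.
Qed.

Lemma far_spec L m n : far approx L m n = true <-> / 2 ^ L <= rho m n (L + 2).
Proof.
  unfold far, rho; rewrite Nat.leb_le, inv_le_div_iff by (apply den_part_pos || apply pow2_pos).
  rewrite <- INR_pow2, <- mult_INR; split; [apply le_INR | apply INR_le].
Qed.

Lemma clear_of_ball_spec n k b s :
  clear_of_ball approx n k b s <-> / 2 ^ snd (of_nat k) <= rho n (fst (of_nat k)) s + / 2 ^ b.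
Proof.
  unfold clear_of_ball, rho; cbv zeta.
  rewrite inv_le_div_add_iff by (apply den_part_pos || apply pow2_pos).
  rewrite <- !INR_pow2, <- !mult_INR, <- plus_INR.
  split; intros H; [apply le_INR; lia | apply INR_le in H; lia].
Qed.

Lemma dist_self x : dist X x x = 0.
Proof. apply dist_refl; reflexivity. Qed.

Lemma dist_pos_of_neq x y : x <> y -> 0 < dist X x y.
Proof.
  intros Hxy; destruct (Rle_lt_or_eq_dec _ _ (Rge_le _ _ (dist_pos X x y))) as [H|H]; [exact H|].
  exfalso; apply Hxy, dist_refl; auto.
Qed.

Lemma net_separated L m n :
  in_net approx L m -> in_net approx L n -> m <> n -> 3 / 4 * / 2 ^ L <= dist X (q m) (q n).
Proof.
  enough (Hlt : forall m n, (m < n)%nat -> in_net approx L m -> in_net approx L n ->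
            3 / 4 * / 2 ^ L <= dist X (q m) (q n)).
  { intros Hm Hn Hmn; destruct (Nat.lt_total m n) as [H|[H|H]]; [auto | contradiction |].
    rewrite dist_sym; auto. }
  clear m n; intros m n Hmn Hm Hn.
  pose proof (proj1 (far_spec L m n) (proj1 (in_greedy_net_iff _ n) Hn m Hmn Hm)) as Hfar.
  pose proof (rho_between m n (L + 2)) as Hrho; rewrite inv_pow2_add in Hrho; lra.
Qed.

Lemma net_covers L i : exists m, in_net approx L m /\ dist X (q m) (q i) < 5 / 4 * / 2 ^ L.
Proof.
  pose proof (inv_pow2_pos L).
  destruct (classic (in_net approx L i)) as [Hi|Hi].
  - exists i; rewrite dist_self; split; [exact Hi | lra].
  - unfold in_net in Hi; rewrite in_greedy_net_iff in Hi.
    apply not_all_ex_not in Hi as [m Hm].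
    apply imply_to_and in Hm as [Hmi Hm]; apply imply_to_and in Hm as [Hin Hfar].
    exists m; split; [exact Hin|].
    rewrite far_spec in Hfar; apply Rnot_le_lt in Hfar.
    pose proof (rho_between m i (L + 2)) as Hrho; rewrite inv_pow2_add in Hrho; lra.
Qed.

(* Points of one net are [3/4 * 2^-L]-separated, so at most one of them lies
   within [3/8 * 2^-L] of [x]. *)
Lemma net_isolated x L :
  exists e, 0 < e /\ forall n, in_net approx L n -> q n = x \/ e <= dist X x (q n).
Proof.
  pose proof (inv_pow2_pos L).
  destruct (classic (exists n0, in_net approx L n0 /\ q n0 <> x /\ dist X x (q n0) < 3 / 8 * / 2 ^ L))
    as [(n0 & Hn0 & Hq0 & Hd0)|Hnone].
  - exists (dist X x (q n0)); split; [apply dist_pos_of_neq; auto|].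
    intros n Hn; destruct (classic (q n = x)) as [|Hq]; [left; assumption | right].
    destruct (Nat.eq_dec n n0) as [->|Hne]; [lra|].
    pose proof (net_separated _ _ _ Hn Hn0 Hne); pose proof (dist_tri X (q n) (q n0) x).
    rewrite (dist_sym X (q n) x) in *; lra.
  - exists (3 / 8 * / 2 ^ L); split; [lra|].
    intros n Hn; destruct (classic (q n = x)) as [|Hq]; [left; assumption | right].
    apply Rnot_lt_le; intros Hlt; apply Hnone; eauto.
Qed.

Lemma nets_isolated x B : exists e, 0 < e /\
  forall b n, (b < B)%nat -> in_net approx (b + 4) n -> q n = x \/ e <= dist X x (q n).
Proof.
  induction B as [|B (e1 & He1 & H1)]; [exists 1; split; [lra | intros; lia]|].
  destruct (net_isolated x (B + 4)) as (e2 & He2 & H2).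
  exists (Rmin e1 e2); split; [apply Rmin_glb_lt; assumption|].
  intros b n Hb Hn; pose proof (Rmin_l e1 e2); pose proof (Rmin_r e1 e2).
  destruct (Nat.eq_dec b B) as [->|Hne].
  - destruct (H2 n Hn); [left | right; lra]; assumption.
  - destruct (H1 b n ltac:(lia) Hn); [left | right; lra]; assumption.
Qed.

Variables (C : Base X -> Prop) (I : nat -> Prop).
Hypothesis refute_spec : forall k, I k <-> exists m, forall t, refute k m t = 0%nat.
Hypothesis C_spec : forall x, ~ C x <-> exists k, I k /\ basic_ball X q k x.

Lemma eventually_refuted k b : ~ I k -> exists S, forall s, (S <= s)%nat -> refuted refute k b s.
Proof.
  intros HnI.
  assert (Hwit : forall m, exists t, refute k m t <> 0%nat).
  { intros m; apply NNPP; intros Hm; apply HnI, refute_spec; exists m.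
    intros t; apply NNPP; intros Ht; apply Hm; eauto. }
  destruct (eventually_below (fun m s => exists t, (t <= s)%nat /\ refute k m t <> 0%nat) (S b))
    as [S HS].
  { intros m _; destruct (Hwit m) as [t Ht]; exists t; intros s Hs; exists t; auto. }
  exists S; intros s Hs m Hm; apply HS; lia.
Qed.

Lemma clear_of_ball_near x n k b s : ~ basic_ball X q k x ->
  dist X x (q n) <= 5 / 8 * / 2 ^ b -> (b + 3 <= s)%nat -> clear_of_ball approx n k b s.
Proof.
  intros Hout Hnear Hs; apply clear_of_ball_spec.
  unfold basic_ball in Hout; destruct (of_nat k) as [c j]; cbn [fst snd]; apply Rnot_lt_le in Hout.
  pose proof (rho_between n c s); pose proof (dist_tri X x (q c) (q n)).
  pose proof (inv_pow2_le _ _ Hs) as Hsmall; rewrite inv_pow2_add in Hsmall.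
  pose proof (inv_pow2_pos b); lra.
Qed.

Lemma enumerated_near x n b : C x -> in_net approx (b + 4) n ->
  dist X x (q n) <= 5 / 8 * / 2 ^ b -> enumerated approx refute n.
Proof.
  intros HCx Hnet Hnear.
  destruct (eventually_below (fun k s => refuted refute k b s \/ clear_of_ball approx n k b s) b)
    as [S HS].
  { intros k _; destruct (classic (I k)) as [Ik|nIk].
    - exists (b + 3)%nat; intros s Hs; right; apply (clear_of_ball_near x); auto.
      intros Hball; apply (proj2 (C_spec x)); eauto.
    - destruct (eventually_refuted k b nIk) as [S HS]; exists S; auto. }
  exists (S + b)%nat, b; split; [lia|]; split; [exact Hnet|].
  intros k Hk; apply HS; lia.
Qed.

Hypothesis dense : dense_seq X q.
Hypothesis perfect_X : perfect X.

Lemma limit_point_of_C x : C x -> limit_point X q (enumerated approx refute) x.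
Proof.
  intros HCx eps Heps.
  destruct (perfect_X x (Rmin (eps / 2) (/ 2))) as (y & Hyx & Hxy); [apply Rmin_glb_lt; lra|].
  pose proof (Rmin_l (eps / 2) (/ 2)); pose proof (Rmin_r (eps / 2) (/ 2)).
  destruct (dyadic_scale (dist X x y)) as (b & Hlo & Hhi); [apply dist_pos_of_neq; auto | lra |].
  destruct (dense y (/ 2 ^ (b + 5))) as [i Hi]; [apply inv_pow2_pos|].
  destruct (net_covers (b + 4) i) as (n & Hnet & Hni).
  rewrite !inv_pow2_add in Hlo, Hhi, Hi, Hni; pose proof (inv_pow2_pos b).
  assert (Hyn : dist X y (q n) < / 2 ^ b * (7 / 64)).
  { pose proof (dist_tri X y (q n) (q i)) as Htri; rewrite (dist_sym X (q i) (q n)) in Htri; lra. }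
  pose proof (dist_tri X x (q n) y).
  exists n; split; [apply (enumerated_near x n b); auto; lra | split].
  - intros Heq; rewrite Heq, dist_sym in Hyn; lra.
  - lra.
Qed.

Lemma admitted_far_from_ball x k : I k -> basic_ball X q k x -> exists B e, 0 < e /\
  forall n b s, (B <= b)%nat -> (b <= s)%nat -> admitted approx refute n b s -> e <= dist X x (q n).
Proof.
  intros Ik Hball; destruct (proj1 (refute_spec k) Ik) as [m0 Hm0].
  unfold basic_ball in Hball; destruct (of_nat k) as [c j] eqn:Hk.
  set (mu := / 2 ^ j - dist X x (q c)).
  destruct (inv_pow2_lt_any (mu / 4)) as [N HN]; [unfold mu; lra|].
  exists (N + k + m0 + 1)%nat, (mu / 4); split; [unfold mu; lra|].
  intros n b s Hb Hbs [_ Hall].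
  destruct (Hall k ltac:(lia)) as [Href|Hclear].
  - destruct (Href m0 ltac:(lia)) as (t & _ & Ht); contradiction (Ht (Hm0 t)).
  - apply clear_of_ball_spec in Hclear; rewrite Hk in Hclear; cbn [fst snd] in Hclear.
    pose proof (rho_between n c s); pose proof (dist_tri X (q n) (q c) x).
    rewrite (dist_sym X (q n) x) in *.
    pose proof (inv_pow2_le N s ltac:(lia)); pose proof (inv_pow2_le N b ltac:(lia)).
    unfold mu in *; lra.
Qed.

Lemma not_limit_point_of_not_C x : ~ C x -> ~ limit_point X q (enumerated approx refute) x.
Proof.
  intros HnC Hlim; destruct (proj1 (C_spec x) HnC) as (k & Ik & Hball).
  destruct (admitted_far_from_ball x k Ik Hball) as (B & e1 & He1 & Hfar).
  destruct (nets_isolated x B) as (e2 & He2 & Hiso).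
  destruct (Hlim (Rmin e1 e2)) as (n & (s & b & Hbs & Hadm) & Hqn & Hdn);
    [apply Rmin_glb_lt; assumption|].
  pose proof (Rmin_l e1 e2); pose proof (Rmin_r e1 e2).
  destruct (le_lt_dec B b) as [HB|HB].
  - pose proof (Hfar n b s HB Hbs Hadm); lra.
  - destruct (Hiso b n HB (proj1 Hadm)) as [Heq|Hge]; [contradiction | lra].
Qed.

Lemma C_iff_limit_point x : C x <-> limit_point X q (enumerated approx refute) x.
Proof.
  split; [apply limit_point_of_C|].
  intros Hlim; apply NNPP; intros HnC; exact (not_limit_point_of_not_C x HnC Hlim).
Qed.
End Correctness.

Lemma ternary_choice (P : nat -> nat -> nat -> nat -> Prop) :
  (forall i j p, exists r, P i j p r) -> exists F, forall i j p, P i j p (F i j p).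
Proof.
  intros H; destruct (functional_choice (fun '(i, j, p) r => P i j p r)) as [F HF].
  - intros [[i j] p]; apply H.
  - exists (fun i j p => F (i, j, p)); intros i j p; exact (HF (i, j, p)).
Qed.

Theorem mainTheorem16 (X : Metric_Space) (q : nat -> Base X) (C : Base X -> Prop) :
  computable_metric_space X q ->
  perfect X ->
  pi01_jump X q C ->
  exists W : nat -> Prop, ce W /\
    (forall x : Base X, C x <-> limit_point X q W x).
Proof.
  intros [dense [e_a approx_total]] perfect_X [I [[e_r [refute_total HI]] C_spec]].
  destruct (ternary_choice _ approx_total) as [approx Happrox].
  destruct (ternary_choice _ refute_total) as [refute Hrefute].
  exists (enumerated approx refute); split.
  - apply (enumerated_ce approx refute e_a e_r); intros; [apply Happrox | apply Hrefute].
  - apply (C_iff_limit_point X q approx refute (fun i j p => proj2 (Happrox i j p)) C I); auto.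
    intros k; rewrite HI; split; intros [m Hm]; exists m; intros t.
    + exact (eval_deterministic _ _ _ _ (Hrefute k m t) (Hm t)).
    + rewrite <- (Hm t); apply Hrefute.
Qed.
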